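(* A diamond-free graph is clique simplicial if and only if it is edge simplicial.
   Context: A vertex $v$ is simplicial if $N[v]$ is a clique; a clique is simplicial if it equals $N[v]$ for a simplicial vertex $v$. A graph is clique simplicial if every inclusion-maximal clique is simplicial, and edge simplicial if every edge lies in a simplicial clique. The diamond is $K_4$ minus one edge; diamond-free means no induced diamond. *)

From mathcomp Require Import all_boot.
Set Implicit Arguments. Unset Strict Implicit. Unset Printing Implicit Defensive.

Definition simple_graph (T : finType) (e : rel T) : Prop :=
  symmetric e /\ irreflexive e.

Definition is_clique (T : finType) (e : rel T) (K : {set T}) : bool :=
  [forall x in K, forall y in K, (x != y) ==> e x y].

Definition closed_nbhd (T : finType) (e : rel T) (v : T) : {set T} :=
  v |: [set u | e v u].

Definition simplicial_vertex (T : finType) (e : rel T) (v : T) : bool :=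
  is_clique e (closed_nbhd e v).

Definition simplicial_clique (T : finType) (e : rel T) (K : {set T}) : Prop :=
  exists v, simplicial_vertex e v /\ K = closed_nbhd e v.

Definition maximal_clique (T : finType) (e : rel T) (K : {set T}) : bool :=
  maxset (is_clique e) K.

Definition clique_simplicial (T : finType) (e : rel T) : Prop :=
  forall K : {set T}, maximal_clique e K -> simplicial_clique e K.

Definition edge_simplicial (T : finType) (e : rel T) : Prop :=
  forall x y : T, e x y ->
    exists K : {set T}, [/\ simplicial_clique e K, x \in K & y \in K].

(* Induced diamond (K4 minus the edge c d) on distinct a b c d. *)
Definition induced_diamond (T : finType) (e : rel T) (a b c d : T) : Prop :=
  [/\ uniq [:: a; b; c; d],
      [&& e a b, e a c, e a d, e b c & e b d] & ~~ e c d].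

Definition diamond_free (T : finType) (e : rel T) : Prop :=
  forall a b c d : T, ~ induced_diamond e a b c d.

From mathcomp Require Import all_boot.

Set Implicit Arguments.
Unset Strict Implicit.

(* (->) Every edge xy spans a clique [set x; y], which extends to a maximal
   clique; that maximal clique is simplicial and contains x and y.

   (<-) Let K be a maximal clique; it is nonempty because the vertex type is.
   If K has two distinct vertices x, y, the edge xy lies in some simplicial
   clique N[v].  Diamond-freeness forces the whole of K into N[v] (a vertex
   of K outside N[v] would span a diamond with x, y, v), and maximality of K
   gives K = N[v].  If K = [set x], maximality forces x to be isolated, so
   K = N[x] and x is (trivially) simplicial. *)

Section Cliques.

Variables (T : finType) (e : rel T).

Lemma cliqueP (K : {set T}) :
  reflect (forall x y, x \in K -> y \in K -> x != y -> e x y) (is_clique e K).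
Proof.
apply: (iffP forallP) => [cK x y xK yK nxy | cK x].
  by move: (cK x); rewrite xK => /forallP/(_ y); rewrite yK nxy.
apply/implyP=> xK; apply/forallP=> y.
by apply/implyP=> yK; apply/implyP; apply: cK.
Qed.

Lemma in_closed_nbhd (v w : T) : (w \in closed_nbhd e v) = (w == v) || e v w.
Proof. by rewrite !inE. Qed.

(* Over a nonempty vertex type the empty set is never a maximal clique,
   since every singleton is a clique. *)
Lemma maximal_clique_neq0 (K : {set T}) :
  0 < #|T| -> maximal_clique e K -> K != set0.
Proof.
case/card_gt0P=> x0 _ maxK; apply/eqP=> K0.
have c1 : is_clique e [set x0].
  by apply/cliqueP=> a b; rewrite !inE => /eqP-> /eqP->; rewrite eqxx.
have := maxsetsup maxK c1; rewrite K0 sub0set => /(_ isT)/setP/(_ x0).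
by rewrite !inE eqxx.
Qed.

Hypothesis e_sym : symmetric e.

Lemma clique_pair (x y : T) : e x y -> is_clique e [set x; y].
Proof.
move=> exy; apply/cliqueP=> a b.
by rewrite !inE => /orP[]/eqP-> /orP[]/eqP->; rewrite ?eqxx // e_sym.
Qed.

Lemma edge_in_maximal_clique (x y : T) :
  e x y -> exists2 K, maximal_clique e K & (x \in K) && (y \in K).
Proof.
move=> /clique_pair/maxset_exists[K maxK sub]; exists K => //.
by rewrite !(subsetP sub) // !inE eqxx ?orbT.
Qed.

Lemma maximal_singleton_nbhd (x : T) :
  maximal_clique e [set x] -> closed_nbhd e x = [set x].
Proof.
move=> maxx; apply/setP=> u; rewrite in_closed_nbhd inE.
case: (eqVneq u x) => //= nux; apply/negbTE/negP=> exu.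
have sub : [set x] \subset [set x; u] by rewrite sub1set !inE eqxx.
have /setP/(_ u) := maxsetsup maxx (clique_pair exu) sub.
by rewrite !inE eqxx orbT (negbTE nux).
Qed.

Hypothesis e_dfree : diamond_free e.

(* Diamond lemma: a clique sharing two distinct vertices with N[v] lies
   inside N[v]; otherwise some w of K outside N[v] spans a diamond on
   x, y (the common part) and v, w (the non-adjacent pair). *)
Lemma clique_sub_closed_nbhd (K : {set T}) (x y v : T) :
  is_clique e K -> x \in K -> y \in K -> x != y ->
  x \in closed_nbhd e v -> y \in closed_nbhd e v -> K \subset closed_nbhd e v.
Proof.
move=> /cliqueP cK xK yK nxy; rewrite !in_closed_nbhd.
case: (eqVneq x v) => [<- _ _ | nxv /= exv].
  apply/subsetP=> w wK; rewrite in_closed_nbhd.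
  by case: (eqVneq w x) => //= nwx; rewrite cK // eq_sym.
case: (eqVneq y v) => [<- _ | nyv /= eyv].
  apply/subsetP=> w wK; rewrite in_closed_nbhd.
  by case: (eqVneq w y) => //= nwy; rewrite cK // eq_sym.
apply/subsetP=> w wK; rewrite in_closed_nbhd.
case: (eqVneq w v) => //= nwv; apply: contraT => nevw.
have nwx : w != x by apply: contraNneq nevw => ->.
have nwy : w != y by apply: contraNneq nevw => ->.
exfalso; apply: (@e_dfree x y v w); split => //.
- by rewrite /= !inE !negb_or nxy nxv nyv !(eq_sym _ w) nwx nwy nwv.
- by rewrite cK // (cK x w) ?(cK y w) 1?eq_sym // !(e_sym _ v) exv eyv.
Qed.

Lemma maximal_clique_simplicial (K : {set T}) :
  edge_simplicial e -> maximal_clique e K -> K != set0 -> simplicial_clique e K.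
Proof.
move=> es maxK /set0Pn[x xK]; have /cliqueP cK := maxsetp maxK.
case: (boolP [exists y in K, y != x]) => [/exists_inP[y yK nyx] | noother].
  have nxy : x != y by rewrite eq_sym.
  have [_ [[v [simv ->]] xN yN]] := es x y (cK x y xK yK nxy).
  exists v; split => //; apply/esym/(maxsetsup maxK simv).
  exact: clique_sub_closed_nbhd (maxsetp maxK) xK yK nxy xN yN.
have Kx : K = [set x].
  apply/setP=> z; rewrite inE; apply/idP/eqP => [zK | ->//].
  by apply/eqP; apply: contraNT noother => nzx; apply/exists_inP; exists z.
rewrite Kx in maxK *; exists x.
rewrite /simplicial_vertex (maximal_singleton_nbhd maxK).
by split=> //; apply: maxsetp maxK.
Qed.

End Cliques.

Theorem mainTheorem13 (T : finType) (e : rel T) :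
  0 < #|T| -> simple_graph e -> diamond_free e ->
  (clique_simplicial e <-> edge_simplicial e).
Proof.
move=> T_gt0 [e_sym _] e_dfree; split=> [cs x y exy | es K maxK].
  have [K maxK /andP[xK yK]] := edge_in_maximal_clique e_sym exy.
  by exists K; split=> //; apply: cs.
have K_neq0 := maximal_clique_neq0 T_gt0 maxK.
exact: (maximal_clique_simplicial e_sym e_dfree es maxK K_neq0).
Qed.
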